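(* Let $x_0\in\mathbb{R}^2$, $r_0>0$, and let $E$ be a relatively closed subset of $B(x_0,r_0)$ that contains $x_0$ and separates $B(x_0,r_0)$. (1) For all $x\in E\cap B(x_0,r_0)$ and $\gamma>0$ such that $B(x,\gamma r_0)\subset B(x_0,r_0)$ and $\beta_E(x_0,r_0)\le\gamma/4$, the set $E$ separates $B(x,\gamma r_0)$. (2) Assume $\beta_E(x_0,r_0)\le1/100$. Let $x\in E\cap B(x_0,9r_0/10)$ and $r^x_0\ge r_0/10$ be such that $B(x,r^x_0)\subset B(x_0,r_0)$, and let $0<r\le r^x_0$ be such that $\beta_E(x,t)\le1/8$ for all $t\in[r,r^x_0]$. Then $E$ separates $B(x,r)$.
   Context: $B(x,r)$ is the open ball. For a set $F$ and $x\in F$, $\beta_F(x,r)=r^{-1}\inf_\ell\sup_{y\in F\cap B(x,r)}\mathrm{dist}(y,\ell)$, infimum over lines $\ell$ through $x$ (attained). With $\nu(x,r)$ a unit normal of a minimizing line and $D^\pm_t(x,r)=\{z\in B(x,r):\pm(z-x)\cdot\nu(x,r)>t\}$, $F$ separates $B(x,r)$ if $\beta:=\beta_F(x,r)\le1/2$ and $D^+_{\beta r}(x,r)$, $D^-_{\beta r}(x,r)$ lie in distinct connected components of $B(x,r)\setminus F$ (independent of the choice of minimizing line). *)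

From HB Require Import structures.
From mathcomp Require Import all_boot all_order all_algebra.
From mathcomp Require Import all_classical all_reals all_analysis.
Set Implicit Arguments. Unset Strict Implicit. Unset Printing Implicit Defensive.
Import Order.TTheory GRing.Theory Num.Theory.
Import numFieldNormedType.Exports.
Local Open Scope classical_set_scope.
Local Open Scope ring_scope.

Section Plane.
Variable R : realType.
Notation pt := (R * R)%type.

Definition dot2 (u v : pt) : R := u.1 * v.1 + u.2 * v.2.
Definition sub2 (u v : pt) : pt := (u.1 - v.1, u.2 - v.2).
Definition enorm2 (u : pt) : R := Num.sqrt (dot2 u u).

Definition eball (x : pt) (r : R) : set pt := [set z | enorm2 (sub2 z x) < r].

Definition width (F : set pt) (x : pt) (r : R) (nu : pt) : R :=
  sup [set `|dot2 (sub2 y x) nu| | y in F `&` eball x r].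

Definition unit2 (nu : pt) : Prop := enorm2 nu = 1.

(* beta_F(x,r) = r^-1 inf_{lines l through x} sup_{y in F cap B(x,r)} dist(y,l);
   lines through x are parametrized by their unit normal nu, and
   dist(y, l) = |(y - x) . nu|. *)
Definition beta (F : set pt) (x : pt) (r : R) : R :=
  r^-1 * inf [set width F x r nu | nu in unit2].

Definition Dplus (x : pt) (r : R) (nu : pt) (t : R) : set pt :=
  [set z | eball x r z /\ dot2 (sub2 z x) nu > t].
Definition Dminus (x : pt) (r : R) (nu : pt) (t : R) : set pt :=
  [set z | eball x r z /\ - dot2 (sub2 z x) nu > t].

Definition is_component (A C : set pt) : Prop :=
  exists p, A p /\ C = @connected_component (R * R)%type A p.

(* F separates B(x,r): beta <= 1/2 and, for (some) unit normal nu of a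
   minimizing line, D^+_{beta r} and D^-_{beta r} lie in distinct connected
   components of B(x,r) \ F *)
Definition separates (F : set pt) (x : pt) (r : R) : Prop :=
  beta F x r <= 2^-1 /\
  exists nu, unit2 nu /\ r^-1 * width F x r nu = beta F x r /\
    exists C1 C2, is_component (eball x r `\` F) C1 /\
                  is_component (eball x r `\` F) C2 /\ C1 <> C2 /\
                  Dplus x r nu (beta F x r * r) `<=` C1 /\
                  Dminus x r nu (beta F x r * r) `<=` C2.

Definition rel_closed_in (E B : set pt) : Prop :=
  exists C : set pt, @closed (R * R)%type C /\ E = C `&` B.
End Plane.

From HB Require Import structures.
From mathcomp Require Import all_boot all_order all_algebra.
From mathcomp Require Import all_classical all_reals all_analysis.
From mathcomp Require Import ring lra.
Set Implicit Arguments. Unset Strict Implicit. Unset Printing Implicit Defensive.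
Import Order.TTheory GRing.Theory Num.Theory.
Import numFieldNormedType.Exports.
Local Open Scope classical_set_scope.
Local Open Scope ring_scope.

(* Let nu0 be an optimal normal at (x0, r0), and nu one at (x, rho) with rho = gamma r0.
   Since E lies in the strip of half-width beta_E(x0, r0) r0 <= rho / 4 around the line
   through x0 with normal nu0, beta_E(x, rho) <= 1/2.  Rotating nu by +-arccos(3/5) gives a
   unit vector e with e.nu = 3/5 and |e.nu0| >= 3/5, so the points x +- (9/10) rho e lie in
   D^+ and D^- of B(x, rho) and at the same time on opposite sides of the strip at (x0, r0).
   The half-discs D^+-, being convex and disjoint from E, each lie in a single component, and
   a path in B(x, rho) \ E between the two points would join the two sides at (x0, r0).
   Part (2) applies (1) once to reach B(x, r^x_0) and then halves the radius repeatedly,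
   each halving being (1) with gamma = 1/2 and the bound beta <= 1/8 at the current scale. *)

Section StarShaped.
Variables (R : realType) (V : normedModType R).

Definition lerp (p q : V) (t : R) : V := p + t *: (q - p).

Lemma connected_segment (p q : V) : connected (lerp p q @` `[0, 1]).
Proof.
apply: connected_continuous_connected; first exact: segment_connected.
apply: continuous_subspaceT => t; apply: cvgD; first exact: cvg_cst.
by apply: cvgZ; [exact: cvg_id|exact: cvg_cst].
Qed.

Lemma star_sub_connected_component (A D : set V) p : D p -> D `<=` A ->
  (forall q t, D q -> 0 <= t <= 1 -> D (lerp p q t)) ->
  D `<=` connected_component A p.
Proof.
move=> Dp DA Dstar q Dq.
apply: (connected_component_max _ _ (connected_segment (p := p) (q := q))).
- by exists 0; [rewrite /= in_itv /= lexx ler01|rewrite /lerp scale0r addr0].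
- by move=> _ [t /= + <-]; rewrite in_itv /= => t01; exact/DA/Dstar.
- by exists 1; [rewrite /= in_itv /= lexx ler01|rewrite /lerp scale1r addrC subrK].
Qed.

End StarShaped.

Lemma connected_component_subset (T : topologicalType) (A B : set T) p :
  A `<=` B -> connected_component A p `<=` connected_component B p.
Proof.
move=> AB; have [Ap|nAp] := pselect (A p); last by rewrite connected_component_out.
apply: connected_component_max.
- exact: connected_component_refl.
- exact: subset_trans (@connected_component_sub _ A p) AB.
- exact: component_connected.
Qed.

Section Plane.
Variable R : realType.
Implicit Types (x y z c p q w nu mu : R * R) (r s t u k : R) (F : set (R * R)).

Lemma eballE x r z : 0 < r ->
  eball x r z <-> (z.1 - x.1) * (z.1 - x.1) + (z.2 - x.2) * (z.2 - x.2) < r * r.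
Proof.
move=> r0; rewrite /eball /enorm2 /dot2 /sub2 /=.
by rewrite -{1}(gtr0_norm r0) -sqrtr_sqr expr2 ltr_sqrt ?mulr_gt0.
Qed.

Lemma eball_gt0 x r z : eball x r z -> 0 < r.
Proof. exact: le_lt_trans (sqrtr_ge0 _). Qed.

Lemma eball_center x r : 0 < r -> eball x r x.
Proof. by move=> r0; apply/eballE => //; rewrite !subrr !mulr0 addr0 mulr_gt0. Qed.

Lemma le_eball x s t : s <= t -> eball x s `<=` eball x t.
Proof. by move=> st z /lt_le_trans; apply. Qed.

Lemma eball_coord_lt x r z : eball x r z -> `|z.1 - x.1| < r /\ `|z.2 - x.2| < r.
Proof.
move=> Bz; have r0 := eball_gt0 Bz; have := (eballE x z r0).1 Bz.
move: (z.1 - x.1) (z.2 - x.2) => a b h.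
have ha : a * a < r * r by nra.
have hb : b * b < r * r by nra.
by split; rewrite ltr_norml; apply/andP; split; nra.
Qed.

Lemma unit2E nu : unit2 nu <-> nu.1 * nu.1 + nu.2 * nu.2 = 1.
Proof.
rewrite /unit2 /enorm2 /dot2; split => [h|->]; last exact: sqrtr1.
have h0 : 0 <= nu.1 * nu.1 + nu.2 * nu.2 by nra.
by apply/eqP; rewrite -(eqr_sqrt h0 ler01) sqrtr1; apply/eqP.
Qed.

Lemma unit2N nu : unit2 nu -> unit2 (- nu).
Proof. by move=> /unit2E h; apply/unit2E; rewrite -h /=; ring. Qed.

Lemma shiftE x w k : x + k *: w = (x.1 + k * w.1, x.2 + k * w.2).
Proof. by []. Qed.

Lemma eball_shift x w k r : unit2 w -> `|k| < r -> eball x r (x + k *: w).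
Proof.
move=> /unit2E uw; rewrite ltr_norml => /andP[kl kr].
have r0 : 0 < r by lra.
apply/(eballE _ _ r0); rewrite shiftE /=.
have -> : (x.1 + k * w.1 - x.1) * (x.1 + k * w.1 - x.1) +
    (x.2 + k * w.2 - x.2) * (x.2 + k * w.2 - x.2) = k * k by rewrite -[k * k]mulr1 -uw; ring.
nra.
Qed.

Lemma lerpE p q t : lerp p q t = (p.1 + t * (q.1 - p.1), p.2 + t * (q.2 - p.2)).
Proof. by []. Qed.

Lemma eball_lerp x r p q t : eball x r p -> eball x r q -> 0 <= t <= 1 ->
  eball x r (lerp p q t).
Proof.
move=> Bp Bq /andP[t0 t1]; have r0 := eball_gt0 Bp.
move/(eballE _ _ r0): Bp; move/(eballE _ _ r0): Bq => hq hp.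
apply/(eballE _ _ r0); rewrite lerpE /=.
have e (a b d : R) : a + t * (b - a) - d = (1 - t) * (a - d) + t * (b - d) by ring.
rewrite !e.
move: hp hq; move: (p.1 - x.1) (p.2 - x.2) (q.1 - x.1) (q.2 - x.2) => a1 a2 b1 b2.
set A := a1 * a1 + a2 * a2; set B := b1 * b1 + b2 * b2 => hA hB.
have -> : ((1 - t) * a1 + t * b1) * ((1 - t) * a1 + t * b1) +
          ((1 - t) * a2 + t * b2) * ((1 - t) * a2 + t * b2) =
  (1 - t) * A + t * B - t * (1 - t) * ((a1 - b1) ^+ 2 + (a2 - b2) ^+ 2).
  by rewrite /A /B; ring.
have hD : 0 <= t * (1 - t) * ((a1 - b1) ^+ 2 + (a2 - b2) ^+ 2).
  by apply: mulr_ge0; [apply: mulr_ge0; lra|rewrite addr_ge0 ?sqr_ge0].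
have [AB|BA] := leP A B.
  have : (1 - t) * A <= (1 - t) * B by rewrite ler_wpM2l ?subr_ge0.
  lra.
have : t * B <= t * A by rewrite ler_wpM2l // ltW.
lra.
Qed.

Lemma dot2_sub2_trans z y x nu :
  dot2 (sub2 z x) nu = dot2 (sub2 z y) nu + dot2 (sub2 y x) nu.
Proof. by rewrite /dot2 /=; ring. Qed.

Lemma dot2_sub2_shift x c w k nu :
  dot2 (sub2 (x + k *: w) c) nu = dot2 (sub2 x c) nu + k * dot2 w nu.
Proof. by rewrite shiftE /dot2 /=; ring. Qed.

Lemma dot2_sub2_shift_center x w k nu : dot2 (sub2 (x + k *: w) x) nu = k * dot2 w nu.
Proof. by rewrite dot2_sub2_shift /dot2 /sub2 /= !subrr !mul0r !add0r. Qed.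

Lemma dot2_sub2_lerp x p q t nu : dot2 (sub2 (lerp p q t) x) nu =
  (1 - t) * dot2 (sub2 p x) nu + t * dot2 (sub2 q x) nu.
Proof. by rewrite lerpE /dot2 /=; ring. Qed.

Lemma le_width F x r nu y : F y -> eball x r y ->
  `|dot2 (sub2 y x) nu| <= width F x r nu.
Proof.
move=> Fy By; apply: ub_le_sup; last by exists y.
exists (r * (`|nu.1| + `|nu.2|)) => _ [z [_ Bz] <-].
have [h1 h2] := eball_coord_lt Bz.
rewrite /dot2 /sub2 /=; apply: (le_trans (ler_normD _ _)).
by rewrite !normrM mulrDr lerD // ler_wpM2r // ltW.
Qed.

Lemma width_le F x r nu M : 0 <= M ->
  (forall y, F y -> eball x r y -> `|dot2 (sub2 y x) nu| <= M) ->
  width F x r nu <= M.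
Proof.
move=> M0 h; rewrite /width.
have [->|ne] := eqVneq [set `|dot2 (sub2 y x) nu| | y in F `&` eball x r] set0.
  by rewrite sup0.
by apply: ge_sup; [exact/set0P|move=> _ [y [Fy By] <-]; exact: h].
Qed.

Lemma width_ge0 F x r nu : 0 <= width F x r nu.
Proof.
rewrite /width.
have [->|/set0P [_ [y [Fy By] _]]] :=
  eqVneq [set `|dot2 (sub2 y x) nu| | y in F `&` eball x r] set0.
  by rewrite sup0.
exact: le_trans (normr_ge0 _) (le_width nu Fy By).
Qed.

Lemma widthN F x r nu : width F x r (- nu) = width F x r nu.
Proof.
rewrite /width; congr sup; apply: eq_imagel => y _.
by rewrite /dot2 /= !mulrN -opprD normrN.
Qed.

Lemma width_lipschitz F x r nu mu : 0 <= r ->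
  width F x r nu <= width F x r mu + r * (`|nu.1 - mu.1| + `|nu.2 - mu.2|).
Proof.
move=> r0; apply: width_le => [|y Fy By].
  by rewrite addr_ge0 ?width_ge0 // mulr_ge0 ?addr_ge0.
have [h1 h2] := eball_coord_lt By.
have -> : dot2 (sub2 y x) nu = dot2 (sub2 y x) mu +
    ((y.1 - x.1) * (nu.1 - mu.1) + (y.2 - x.2) * (nu.2 - mu.2)).
  by rewrite /dot2 /=; ring.
apply: (le_trans (ler_normD _ _)); rewrite lerD ?le_width //.
apply: (le_trans (ler_normD _ _)).
by rewrite !normrM mulrDr lerD // ler_wpM2r // ltW.
Qed.

Lemma continuous_width_upper_circle F x r : 0 < r ->
  continuous (fun t : R => width F x r (t, Num.sqrt (1 - t * t))).
Proof.
move=> r0 t.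
have hc : {for t, continuous (fun s : R => Num.sqrt (1 - s * s))}.
  apply: continuous_comp; last exact: sqrt_continuous.
  by apply: cvgB; [exact: cvg_cst|apply: cvgM; exact: cvg_id].
set h := fun s : R => Num.sqrt (1 - s * s) in hc *.
apply/cvgrPdist_lt => e e0.
have e'0 : 0 < e / (4 * r) by rewrite divr_gt0 // mulr_gt0.
have /cvgrPdist_lt /(_ _ e'0) H1 := hc.
have /cvgrPdist_lt /(_ _ e'0) H2 := @cvg_id _ (nbhs t).
near=> s.
have h1 : `|h t - h s| < e / (4 * r) by near: s; exact: H1.
have h2 : `|t - s| < e / (4 * r) by near: s; exact: H2.
have L1 := width_lipschitz F x (t, h t) (s, h s) (ltW r0).
have L2 := width_lipschitz F x (s, h s) (t, h t) (ltW r0).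
move: L1 L2; rewrite /= (distrC s t) (distrC (h s)) => L1 L2.
have K : r * (`|t - s| + `|h t - h s|) < e.
  have -> : e = r * (e / (4 * r) * 4) by field; rewrite gt_eqF.
  rewrite ltr_pM2l //; lra.
rewrite ltr_norml; apply/andP; split; lra.
Unshelve. all: by end_near.
Qed.

Lemma width_min_attained F x r : 0 < r ->
  exists2 nu, unit2 nu & forall mu, unit2 mu -> width F x r nu <= width F x r mu.
Proof.
move=> r0.
have [c c11 fmin] := EVT_min (le_trans (lerN10 R) ler01)
  (continuous_subspaceT (continuous_width_upper_circle (F := F) (x := x) r0)).
have upper mu : unit2 mu -> 0 <= mu.2 ->
    width F x r (c, Num.sqrt (1 - c * c)) <= width F x r mu.
  case: mu => m1 m2 /unit2E /= hm m20.
  have -> : m2 = Num.sqrt (1 - m1 * m1).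
    by rewrite -hm addrC addKr -expr2 sqrtr_sqr ger0_norm.
  by apply: fmin; rewrite in_itv /=; apply/andP; split; nra.
exists (c, Num.sqrt (1 - c * c)) => [|mu umu].
  apply/unit2E => /=; rewrite -[Num.sqrt _ * _]expr2 sqr_sqrtr; first ring.
  by move: c11; rewrite in_itv /= => /andP[? ?]; nra.
have [mu20|mu20] := leP 0 mu.2; first exact: upper.
by rewrite -[width F x r mu]widthN; apply: upper; [exact: unit2N|rewrite /= oppr_ge0 ltW].
Qed.

Lemma beta_mulr F x r : 0 < r ->
  beta F x r * r = inf [set width F x r nu | nu in @unit2 R].
Proof. by move=> r0; rewrite /beta mulrC mulrA mulfV ?gt_eqF // mul1r. Qed.

Lemma beta_le_width F x r nu : 0 < r -> unit2 nu -> beta F x r * r <= width F x r nu.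
Proof.
move=> r0 unu; rewrite beta_mulr //; apply: ge_inf; last by exists nu.
by exists 0 => _ [mu _ <-]; exact: width_ge0.
Qed.

Lemma beta_attained F x r : 0 < r ->
  exists2 nu, unit2 nu & width F x r nu = beta F x r * r.
Proof.
move=> r0; have [nu unu numin] := width_min_attained F x r0.
exists nu => //; apply/eqP; rewrite eq_le beta_le_width // andbT beta_mulr //.
by apply: lb_le_inf; [exists (width F x r nu), nu|move=> _ [mu umu <-]; exact: numin].
Qed.

Lemma minimizerE F x r nu : 0 < r ->
  (r^-1 * width F x r nu = beta F x r) <-> (width F x r nu = beta F x r * r).
Proof.
move=> r0; split => [<-|->]; first by rewrite mulrAC mulVf ?gt_eqF ?mul1r.
by rewrite mulrCA mulVf ?gt_eqF ?mulr1.
Qed.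

Lemma Dminus_Dplus x r nu t : Dminus x r nu t = Dplus x r (- nu) t.
Proof.
by apply/seteqP; split => z [Bz h]; split => //; move: h; rewrite /dot2 /= !mulrN -opprD.
Qed.

Lemma Dplus_lerp x r nu t p q s : Dplus x r nu t p -> Dplus x r nu t q ->
  0 <= s <= 1 -> Dplus x r nu t (lerp p q s).
Proof.
move=> [Bp hp] [Bq hq] s01; split; first exact: eball_lerp.
rewrite dot2_sub2_lerp; case/andP: s01 => s0 s1.
have [s_lt1|s_ge1] := ltP s 1.
  have : 0 < (1 - s) * (dot2 (sub2 p x) nu - t) by rewrite mulr_gt0 // subr_gt0.
  have : 0 <= s * (dot2 (sub2 q x) nu - t) by rewrite mulr_ge0 // subr_ge0 ltW.
  lra.
have -> : s = 1 by lra.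
by rewrite subrr mul0r add0r mul1r.
Qed.

Lemma Dplus_sub_complement F x r nu t : width F x r nu <= t ->
  Dplus x r nu t `<=` eball x r `\` F.
Proof.
move=> wt z [Bz dz]; split => // Fz.
by have := le_width nu Fz Bz; have := ler_norm (dot2 (sub2 z x) nu); lra.
Qed.

Lemma Dplus_sub_component F x r nu t p : width F x r nu <= t ->
  Dplus x r nu t p -> Dplus x r nu t `<=` connected_component (eball x r `\` F) p.
Proof.
move=> wt Dp; apply: star_sub_connected_component => //.
  exact: Dplus_sub_complement.
by move=> q s Dq s01; exact: Dplus_lerp.
Qed.

Lemma Dminus_sub_component F x r nu t p : width F x r nu <= t ->
  Dminus x r nu t p -> Dminus x r nu t `<=` connected_component (eball x r `\` F) p.
Proof. by rewrite Dminus_Dplus -(widthN F x r nu); exact: Dplus_sub_component. Qed.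

Lemma sides_disconnected_separates F x r nu p q : 0 < r -> beta F x r <= 2^-1 -> unit2 nu ->
  width F x r nu = beta F x r * r ->
  Dplus x r nu (beta F x r * r) p -> Dminus x r nu (beta F x r * r) q ->
  ~ connected_component (eball x r `\` F) p q -> separates F x r.
Proof.
move=> r0 bhalf unu wnu Dp Dq pq; split => //; exists nu.
split => //; split; first exact/minimizerE.
have wle : width F x r nu <= beta F x r * r by rewrite wnu.
have Cp := Dplus_sub_component wle Dp; have Cq := Dminus_sub_component wle Dq.
exists (connected_component (eball x r `\` F) p), (connected_component (eball x r `\` F) q).
split; first by exists p; split => //; exact: connected_component_sub (Cp _ Dp).
split; first by exists q; split => //; exact: connected_component_sub (Cq _ Dq).
split=> // Cpq; apply: pq; rewrite Cpq; exact: Cq.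
Qed.

Lemma separates_sides_disconnected F x r : separates F x r ->
  exists nu, [/\ unit2 nu, r^-1 * width F x r nu = beta F x r &
    forall p q, Dplus x r nu (beta F x r * r) p -> Dminus x r nu (beta F x r * r) q ->
      ~ connected_component (eball x r `\` F) p q].
Proof.
move=> [_ [nu [unu [wnu [C1 [C2 [[p1 [_ ->]] [[p2 [_ ->]] [C12 [DC1 DC2]]]]]]]]]].
exists nu; split => // p q Dp Dq pq; apply: C12.
rewrite (same_connected_component (DC1 _ Dp)) (same_connected_component pq).
exact/esym/same_connected_component/DC2.
Qed.

Lemma width_subball F c r x rho nu : 0 < rho -> F x -> eball x rho `<=` eball c r ->
  width F x rho nu <= 2 * width F c r nu.
Proof.
move=> rho0 Fx sub; apply: width_le => [|y Fy By].
  by rewrite mulr_ge0 ?width_ge0.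
have := le_width nu Fy (sub _ By); have := le_width nu Fx (sub _ (eball_center x rho0)).
rewrite (dot2_sub2_trans y x c) !ler_norml => /andP[? ?] /andP[? ?].
by apply/andP; split; lra.
Qed.

Lemma exists_unit_rotation nu nu0 : unit2 nu -> unit2 nu0 -> exists w,
  [/\ unit2 w, dot2 w nu = 3/5 & 9/25 <= dot2 w nu0 * dot2 w nu0].
Proof.
move=> /unit2E unu /unit2E unu0.
(* (a, b) are the coordinates of nu0 in the orthonormal frame (nu, nu^perp); the rotation
   direction e = +-1 is chosen with e a b >= 0, so (3a + 4 e b)^2 >= 9 (a^2 + b^2). *)
set a := dot2 nu nu0; set b := - nu.2 * nu0.1 + nu.1 * nu0.2.
have ab1 : a * a + b * b = 1.
  transitivity ((nu.1 * nu.1 + nu.2 * nu.2) * (nu0.1 * nu0.1 + nu0.2 * nu0.2)).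
    by rewrite /a /b /dot2; ring.
  by rewrite unu unu0 mulr1.
pose rot e := (3/5 * nu.1 - e * 4/5 * nu.2, 3/5 * nu.2 + e * 4/5 * nu.1).
have rotE e : e * e = 1 -> [/\ unit2 (rot e), dot2 (rot e) nu = 3/5 &
    dot2 (rot e) nu0 = 3/5 * a + e * 4/5 * b].
  move=> e2; split; last 2 first.
  - rewrite /rot /dot2 /=; transitivity (3/5 * (nu.1 * nu.1 + nu.2 * nu.2)); first ring.
    by rewrite unu mulr1.
  - by rewrite /rot /a /b /dot2 /=; ring.
  apply/unit2E; transitivity ((9/25 + 16/25 * (e * e)) * (nu.1 * nu.1 + nu.2 * nu.2)).
    by rewrite /rot /=; field.
  by rewrite e2 unu mulr1; lra.
have [ab0|ab0] := leP 0 (a * b).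
  have [? ? e] := rotE 1 (mulr1 1); exists (rot 1); split => //; rewrite e; nra.
have m1 : -1 * -1 = 1 :> R by rewrite mulrNN mulr1.
have [? ? e] := rotE (-1) m1; exists (rot (-1)); split => //; rewrite e; nra.
Qed.

Lemma separates_subball F c r x rho : 0 < r -> 0 < rho -> separates F c r -> F x ->
  eball x rho `<=` eball c r -> 4 * (beta F c r * r) <= rho -> separates F x rho.
Proof.
move=> r0 rho0 sepc Fx sub hb.
have [nu0 [unu0 /(minimizerE F c nu0 r0) w0 disc]] := separates_sides_disconnected sepc.
set b0 := beta F c r * r in w0 disc hb.
have xc : `|dot2 (sub2 x c) nu0| <= b0.
  by rewrite -w0; exact: le_width (sub _ (eball_center x rho0)).
have [nu unu wnu] := beta_attained F x rho0.
have b_half : beta F x rho * rho <= rho / 2.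
  apply: le_trans (beta_le_width F x rho0 unu0) _.
  by have := width_subball nu0 rho0 Fx sub; rewrite w0; lra.
have [e [ue enu ee0]] := exists_unit_rotation unu unu0.
(* k (3/5) = 27/50 rho exceeds both beta_E(x, rho) rho <= rho/2 and 2 beta_E(c, r) r <= rho/2. *)
set k := 9/10 * rho; have k0 : 0 < k by rewrite /k; lra.
have Bp : eball x rho (x + k *: e).
  by apply: eball_shift ue _; rewrite gtr0_norm /k; lra.
have Bm : eball x rho (x + (- k) *: e).
  by apply: eball_shift ue _; rewrite normrN gtr0_norm /k; lra.
apply: (sides_disconnected_separates (p := x + k *: e) (q := x + (- k) *: e) rho0 _ unu wnu).
- by rewrite -(ler_pM2r rho0); lra.
- by split => //; rewrite dot2_sub2_shift_center enu /k; lra.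
- by split => //; rewrite dot2_sub2_shift_center enu /k; lra.
have subF : eball x rho `\` F `<=` eball c r `\` F by move=> z [/sub Bz nFz].
move=> /(connected_component_subset subF) pm.
move: xc; rewrite ler_norml => /andP[xc1 xc2].
have kE : k = 9/10 * rho by [].
have [s0|s0] := leP 0 (dot2 e nu0).
  have ks : k * (3/5) <= k * dot2 e nu0 by rewrite ler_pM2l //; nra.
  apply: (disc _ _ _ _ pm); split; try exact: sub.
    by rewrite dot2_sub2_shift; lra.
  by rewrite dot2_sub2_shift mulNr; lra.
have ks : k * dot2 e nu0 <= k * (- (3/5)) by rewrite ler_pM2l //; nra.
apply: (disc _ _ _ _ (connected_component_sym pm)); split; try exact: sub.
  by rewrite dot2_sub2_shift mulNr; lra.
by rewrite dot2_sub2_shift; lra.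
Qed.

Lemma separates_halve F x s u : 0 < s -> s <= u -> u <= 2 * s ->
  beta F x u <= 1/8 -> F x -> separates F x u -> separates F x s.
Proof.
move=> s0 su u2s bu Fx sepu; have u0 : 0 < u := lt_le_trans s0 su.
apply: (separates_subball u0 s0 sepu Fx (le_eball su)).
by have := ler_wpM2r (ltW u0) bu; lra.
Qed.

Lemma separates_down F x r t : 0 < r -> r <= t -> F x -> separates F x t ->
  (forall s, r <= s -> s <= t -> beta F x s <= 1/8) -> separates F x r.
Proof.
move=> r0 rt Fx sept small.
have halving n s : r <= s -> s <= t -> t <= 2 ^+ n * s -> separates F x s.
  elim: n s => [|n IH] s rs st.
    by rewrite expr0 mul1r => ts; have -> : s = t by apply/eqP; rewrite eq_le st ts.
  rewrite exprSr -mulrA => tn; have s0 : 0 < s := lt_le_trans r0 rs.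
  have [t2s|t2s] := leP t (2 * s).
    by apply: separates_halve s0 st t2s (small t (le_trans rs st) (lexx t)) Fx sept.
  apply: separates_halve s0 _ (lexx _) (small _ _ (ltW t2s)) Fx (IH _ _ (ltW t2s) tn); lra.
have [n tn] : exists n, t / r <= 2 ^+ n.
  exists (Num.Def.archi_bound (t / r)).
  apply: ltW (lt_le_trans (archi_boundP (divr_ge0 (ltW (lt_le_trans r0 rt)) (ltW r0))) _).
  by rewrite -natrX ler_nat ltnW // ltn_expl.
by apply: (halving n) => //; rewrite -ler_pdivrMr // mulrC.
Qed.

End Plane.

Theorem lemma4p15 (R : realType) (x0 : R * R) (r0 : R) (E : set (R * R)) :
  0 < r0 ->
  rel_closed_in E (eball x0 r0) ->
  E x0 ->
  separates E x0 r0 ->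
  (forall (x : R * R) (gamma : R),
      E x -> eball x0 r0 x -> 0 < gamma ->
      eball x (gamma * r0) `<=` eball x0 r0 ->
      beta E x0 r0 <= gamma / 4 ->
      separates E x (gamma * r0)) /\
  (beta E x0 r0 <= 1 / 100 ->
   forall (x : R * R) (rx r : R),
      E x -> eball x0 (9 / 10 * r0) x ->
      r0 / 10 <= rx ->
      eball x rx `<=` eball x0 r0 ->
      0 < r -> r <= rx ->
      (forall t, r <= t -> t <= rx -> beta E x t <= 1 / 8) ->
      separates E x r).
Proof.
move=> r0_gt0 _ _ sep; split.
  move=> x g Ex _ g0 sub hb.
  apply: (separates_subball r0_gt0 (mulr_gt0 g0 r0_gt0) sep Ex sub).
  by rewrite mulrA ler_pM2r //; lra.
move=> hb x rx r Ex _ rx_ge sub r_gt0 rrx small.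
apply: (separates_down r_gt0 rrx Ex _ small).
apply: (separates_subball r0_gt0 (lt_le_trans r_gt0 rrx) sep Ex sub).
by have := ler_wpM2r (ltW r0_gt0) hb; lra.
Qed.
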